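(* Let $\mathbb{Q}^*_+$ act on the ring $\mathcal{A}_f$ of finite adeles by multiplication via the diagonal embedding. For each $a=(a_p)_{p\in\mathcal{P}}\in\mathcal{A}_f$, the closure of the orbit $\mathbb{Q}^*_+a$ is $$\overline{\mathbb{Q}^*_+ a}=\{b\in\mathcal{A}_f : \text{for every } p\in\mathcal{P},\ a_p=0 \implies b_p=0\}.$$
   Context: $\mathcal{P}$ denotes the set of prime numbers; $\mathbb{Q}_p$, $\mathbb{Z}_p$ are the $p$-adic numbers and $p$-adic integers. $\mathcal{A}_f=\{(a_p)\in\prod_{p}\mathbb{Q}_p : a_p\in\mathbb{Z}_p \text{ for all but finitely many } p\}$ with componentwise operations and the restricted product topology, in which the sets $\prod_{p\in F}V_p\times\prod_{p\notin F}\mathbb{Z}_p$ ($F$ finite, $V_p$ a neighbourhood of $0$ in $\mathbb{Q}_p$) form a neighbourhood base at $0$. $\mathbb{Q}$ embeds diagonally in $\mathcal{A}_f$. *)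

(* Finite adeles built concretely:
   Q_p = p-adic Cauchy sequences of rationals (a setoid);
   A_f = families indexed by primes, almost all components in Z_p;
   topology on A_f given by the restricted-product neighbourhood base. *)
From mathcomp Require Import all_boot all_order all_algebra.
Set Implicit Arguments. Unset Strict Implicit. Unset Printing Implicit Defensive.
Import Order.TTheory GRing.Theory Num.Theory.
Local Open Scope ring_scope.

Definition vp (p : nat) (x : rat) : int :=
  (logn p (absz (numq x)))%:Z - (logn p (absz (denq x)))%:Z.

(* x ∈ p^N Z_(p)  (x = 0 or v_p(x) >= N) *)
Definition pdiv_by (p : nat) (N : int) (x : rat) : bool :=
  (x == 0) || (N <= vp p x).

Definition padic_cauchy (p : nat) (u : nat -> rat) : Prop :=
  forall N : int, exists M : nat, forall m n : nat, (M <= m)%N -> (M <= n)%N ->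
    pdiv_by p N (u m - u n).

(* the p-adic number represented by u lies in p^N Z_p *)
Definition Qp_in_ball (p : nat) (N : int) (u : nat -> rat) : Prop :=
  exists M : nat, forall n : nat, (M <= n)%N -> pdiv_by p N (u n).

Definition Qp_eq (p : nat) (u v : nat -> rat) : Prop :=
  forall N : int, Qp_in_ball p N (fun n => u n - v n).

Definition Qp_zero : nat -> rat := fun _ => 0.

(* A raw adele: for each prime p, a representative a p of a_p ∈ Q_p *)
Definition raw_adele := nat -> nat -> rat.

Definition is_finite_adele (a : raw_adele) : Prop :=
  (forall p, prime p -> padic_cauchy p (a p)) /\
  exists B : nat, forall p, prime p -> (B < p)%N -> Qp_in_ball p 0 (a p).

Definition adele_eq (a b : raw_adele) : Prop :=
  forall p, prime p -> Qp_eq p (a p) (b p).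

Definition adele_scale (q : rat) (a : raw_adele) : raw_adele :=
  fun p n => q * a p n.

Definition pos_orbit (a : raw_adele) : raw_adele -> Prop :=
  fun s => exists q : rat, 0 < q /\ adele_eq s (adele_scale q a).

(* s - b lies in the basic neighbourhood  prod_{p in F} p^(N p) Z_p x prod_{p notin F} Z_p
   (the balls p^k Z_p form a neighbourhood base of 0 in Q_p) *)
Definition in_basic_nbhd (F : seq nat) (N : nat -> int) (b s : raw_adele) : Prop :=
  forall p, prime p ->
    Qp_in_ball p (if p \in F then N p else 0) (fun n => s p n - b p n).

Definition adele_closure (S : raw_adele -> Prop) (b : raw_adele) : Prop :=
  forall (F : seq nat) (N : nat -> int), exists s, S s /\ in_basic_nbhd F N b s.

(* If b lies in the closure of Q*_+ a, then each component b_p is a p-adic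
   limit of multiples q a_p, so a_p = 0 forces b_p = 0.  Conversely, fix a
   basic neighbourhood of b.  At a prime p, q a_p approximates b_p to any
   given precision as soon as q is p-adically close enough to c_p = b_n / a_n
   for a large n (any q works when a_p = b_p = 0).  Beyond some bound C all
   components of a and b are integral and it suffices that q be p-integral.
   Such a positive q exists by strong approximation: with D = C!^E clearing
   the denominators of the c_p, approximate each D c_p p-adically by an
   integer, glue these integers by the Chinese remainder theorem, make the
   result positive by adding the modulus, and divide by D. *)

From mathcomp Require Import all_boot all_order all_algebra.
From mathcomp Require Import zify ring.
From Stdlib Require Import Classical ClassicalEpsilon.
Import Order.TTheory GRing.Theory Num.Theory.
Local Open Scope ring_scope.
Set Implicit Arguments. Unset Strict Implicit.

Section valuation.
Variable p : nat.

Lemma vp_frac (m d : int) : m != 0 -> d != 0 ->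
  vp p (m%:~R / d%:~R) = (logn p `|m|)%:Z - (logn p `|d|)%:Z.
Proof.
move=> m0 d0; set x : rat := _ / _.
have x0 : x != 0 by rewrite /x mulf_neq0 ?invr_eq0 ?intr_eq0.
have e : numq x * d = m * denq x.
  apply: (@intr_inj rat); rewrite !intrM numqE /x.
  by rewrite mulrAC divfK ?intr_eq0.
have e2 : (`|numq x| * `|d| = `|m| * `|denq x|)%N by rewrite -!abszM e.
have := congr1 (logn p) e2; rewrite !lognM ?absz_gt0 ?numq_eq0 ?denq_neq0 // => e3.
rewrite /vp; apply/eqP; rewrite subr_eq addrAC eq_sym subr_eq -!PoszD e3 addnC //.
Qed.

Lemma vp_int (z : int) : vp p z%:~R = (logn p `|z|)%:Z.
Proof. by rewrite /vp numq_int denq_int /= logn1 subr0. Qed.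

Lemma vp_nat (n : nat) : vp p n%:R = (logn p n)%:Z.
Proof. exact: (vp_int n). Qed.

Lemma vpN x : vp p (- x) = vp p x.
Proof. by rewrite /vp numqN denqN abszN. Qed.

Lemma vpM x y : x != 0 -> y != 0 -> vp p (x * y) = vp p x + vp p y.
Proof.
move=> x0 y0.
have d0 (z : rat) : (denq z)%:~R != 0 :> rat by rewrite intr_eq0 denq_neq0.
have -> : x * y = (numq x * numq y)%:~R / (denq x * denq y)%:~R.
  by rewrite -{1}[x]divq_num_den -{1}[y]divq_num_den !intrM; field; rewrite !d0.
rewrite vp_frac ?mulf_neq0 ?numq_eq0 ?denq_neq0 // /vp !abszM.
by rewrite !lognM ?absz_gt0 ?numq_eq0 ?denq_neq0 // !PoszD; ring.
Qed.

Lemma vpV x : vp p x^-1 = - vp p x.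
Proof.
have [->|x0] := eqVneq x 0; first by rewrite invr0 /vp /= logn0 logn1.
apply/eqP; rewrite -addr_eq0 -vpM ?invr_neq0 // mulVf //.
by rewrite -[1]/(1%:~R) vp_int logn1.
Qed.

Lemma pdiv_by0 N : pdiv_by p N 0.
Proof. by rewrite /pdiv_by eqxx. Qed.

Lemma pdiv_byN N x : pdiv_by p N (- x) = pdiv_by p N x.
Proof. by rewrite /pdiv_by vpN oppr_eq0. Qed.

Lemma pdiv_byW N N' x : N' <= N -> pdiv_by p N x -> pdiv_by p N' x.
Proof.
by move=> le; rewrite /pdiv_by => /orP [->|h] //; rewrite (le_trans le h) orbT.
Qed.

Lemma pdiv_by_vp x : pdiv_by p (vp p x) x.
Proof. by rewrite /pdiv_by lexx orbT. Qed.

Lemma pdiv_byM N M x y : pdiv_by p N x -> pdiv_by p M y ->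
  pdiv_by p (N + M) (x * y).
Proof.
have [->|x0] := eqVneq x 0; first by rewrite mul0r pdiv_by0.
have [->|y0] := eqVneq y 0; first by rewrite mulr0 pdiv_by0.
rewrite /pdiv_by mulf_eq0 (negbTE x0) (negbTE y0) /= vpM //; exact: lerD.
Qed.

Hypothesis p_pr : prime p.

Lemma logn_addz (a b : int) : a + b != 0 ->
  (minn (logn p `|a|) (logn p `|b|) <= logn p `|(a + b)%R|)%N.
Proof.
move=> ab0; set k := minn _ _.
have dvd_pk (c : int) : (k <= logn p `|c|)%N -> ((p ^ k)%N %| c)%Z.
  have [->|c0 le_k] := eqVneq c 0; first by move=> _; apply: dvdz0.
  by rewrite dvdzE /= pfactor_dvdn // absz_gt0.
have := rpredD (dvd_pk a (geq_minl _ _)) (dvd_pk b (geq_minr _ _)).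
by rewrite dvdzE /= pfactor_dvdn ?absz_gt0.
Qed.

Lemma pdiv_byD N x y : pdiv_by p N x -> pdiv_by p N y -> pdiv_by p N (x + y).
Proof.
have [->|x0] := eqVneq x 0; first by rewrite add0r.
have [->|y0] := eqVneq y 0; first by rewrite addr0.
rewrite /pdiv_by (negbTE x0) (negbTE y0) /=.
have [//|xy0 /=] := eqVneq (x + y) 0.
rewrite -[x]divq_num_den -[y]divq_num_den in xy0 *.
move: (numq x) (denq x) (numq y) (denq y) (numq_eq0 x) (denq_neq0 x)
  (numq_eq0 y) (denq_neq0 y) x0 y0 => n1 d1 n2 d2 <- d10 <- d20 n10 n20 in xy0 *.
have sum_frac : n1%:~R / d1%:~R + n2%:~R / d2%:~R
    = (n1 * d2 + n2 * d1)%:~R / (d1 * d2)%:~R :> rat.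
  by rewrite !intrM intrD !intrM; field; rewrite !intr_eq0 d10 d20.
rewrite sum_frac in xy0 *.
have s0 : n1 * d2 + n2 * d1 != 0.
  by apply: contraNneq xy0 => ->; rewrite mul0r.
rewrite !vp_frac ?mulf_neq0 //.
have := logn_addz s0; rewrite !abszM !lognM ?absz_gt0 //.
move: (logn p `|n1|) (logn p `|n2|) (logn p `|d1|) (logn p `|d2|).
move: (logn p `|(n1 * d2 + n2 * d1)%R|); lia.
Qed.

Lemma pdiv_byB N x y : pdiv_by p N x -> pdiv_by p N y -> pdiv_by p N (x - y).
Proof. by move=> hx hy; apply: pdiv_byD; rewrite ?pdiv_byN. Qed.

Lemma vpD_dominant N x y : x != 0 -> vp p x < N -> pdiv_by p N y ->
  x + y != 0 /\ vp p (x + y) = vp p x.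
Proof.
move=> x0 lt_N y_N.
have x_notS : ~~ pdiv_by p (vp p x + 1) x by rewrite /pdiv_by (negbTE x0) /=; lia.
have xy_notS : ~~ pdiv_by p (vp p x + 1) (x + y).
  apply: contra x_notS => xy_S.
  have y_S : pdiv_by p (vp p x + 1) y by apply: pdiv_byW y_N; lia.
  by have := pdiv_byB xy_S y_S; rewrite addrK.
have xy_vp : pdiv_by p (vp p x) (x + y).
  by apply: pdiv_byD (pdiv_by_vp x) _; apply: pdiv_byW y_N; lia.
move: xy_notS xy_vp; rewrite /pdiv_by; case: eqP => //= _ lt le; split=> //.
lia.
Qed.

Lemma pdiv_by_frac (L : nat) (z d : int) : d != 0 -> logn p `|d| = 0%N ->
  ((p ^ L)%N %| z)%Z -> pdiv_by p L (z%:~R / d%:~R).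
Proof.
move=> d0 ld; have [->|z0] := eqVneq z 0; first by rewrite mul0r pdiv_by0.
rewrite dvdzE /= /pdiv_by vp_frac // ld subr0 lez_nat orbC.
by rewrite -pfactor_dvdn ?absz_gt0 // => ->.
Qed.

Lemma pdiv_by_int (L : nat) (z : int) : ((p ^ L)%N %| z)%Z -> pdiv_by p L z%:~R.
Proof. by move/(pdiv_by_frac (oner_neq0 _) (logn1 p)); rewrite divr1. Qed.

Lemma logn_denq_eq0 x : pdiv_by p 0 x -> logn p `|denq x| = 0%N.
Proof.
have [->|x0] := eqVneq x 0; first by rewrite logn1.
rewrite /pdiv_by (negbTE x0) /= /vp subr_ge0 lez_nat => le_den_num.
have [//|den_gt0] := posnP (logn p `|denq x|).
have p_dvd (z : int) : z != 0 -> (0 < logn p `|z|)%N -> (p %| `|z|)%N.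
  by move=> z0 lz; rewrite -(expn1 p) pfactor_dvdn ?absz_gt0.
have num0 : numq x != 0 by rewrite numq_eq0.
have p_num := p_dvd _ num0 (leq_trans den_gt0 le_den_num).
have := coprime_dvdl p_num (coprime_num_den x).
by rewrite prime_coprime // p_dvd ?denq_neq0.
Qed.

Lemma pdiv_by_nat_approx x (L : nat) : pdiv_by p 0 x ->
  exists r : nat, pdiv_by p L (x - r%:R).
Proof.
move=> x_int; have ld := logn_denq_eq0 x_int.
set n := numq x; set d := denq x.
have d0 : d != 0 := denq_neq0 x.
have co : coprime `|d| (p ^ L).
  apply: coprimeXr; rewrite coprime_sym prime_coprime //.
  by rewrite -(expn1 p) pfactor_dvdn ?absz_gt0 // ld.
set P : int := (p ^ L)%N.
have [u [v uv]] := Bezoutz d P.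
rewrite /gcdz /= (eqP co) in uv.
have P0 : P != 0 by rewrite /P eqz_nat -lt0n expn_gt0 prime_gt0.
(* u inverts d modulo p^L, so d r = n modulo p^L for the residue r of n u. *)
set r := ((n * u) %% P)%Z.
have r_ge0 : 0 <= r := modz_ge0 _ P0.
exists `|r|%N.
have -> : x - (`|r|%N)%:R = (n - r * d)%:~R / d%:~R.
  rewrite -[x]divq_num_den -/n -/d -[(`|r|%N)%:R]/((`|r|%N)%:Z%:~R) gez0_abs //.
  by rewrite intrB intrM; field; rewrite intr_eq0.
apply: pdiv_by_frac => //.
have e_r : n * u = ((n * u) %/ P)%Z * P + r := divz_eq _ _.
set k := ((n * u) %/ P)%Z in e_r *.
have -> : n - r * d = (d * k + n * v) * P.
  rewrite -[n in LHS]mulr1 -[1]uv (_ : r = n * u - k * P); first ring.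
  by rewrite e_r addrC addKr.
exact/dvdz_mull/dvdzz.
Qed.

End valuation.

Section balls.
Variables (p : nat) (N : int).

Lemma Qp_in_ball_ext u v : u =1 v -> Qp_in_ball p N u -> Qp_in_ball p N v.
Proof. by move=> uv [M u_N]; exists M => n /u_N; rewrite uv. Qed.

Lemma Qp_in_ballW N' u : N' <= N -> Qp_in_ball p N u -> Qp_in_ball p N' u.
Proof. by move=> le [M u_N]; exists M => n /u_N; apply: pdiv_byW. Qed.

Lemma Qp_in_ball_cst c : pdiv_by p N c -> Qp_in_ball p N (fun=> c).
Proof. by exists 0%N. Qed.

Lemma Qp_in_ballZ M c u : pdiv_by p M c -> Qp_in_ball p N u ->
  Qp_in_ball p (M + N) (fun n => c * u n).
Proof. by move=> c_M [K u_N]; exists K => n /u_N; apply: pdiv_byM. Qed.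

Hypothesis p_pr : prime p.

Lemma Qp_in_ballD u v : Qp_in_ball p N u -> Qp_in_ball p N v ->
  Qp_in_ball p N (fun n => u n + v n).
Proof.
move=> [M1 u_N] [M2 v_N]; exists (maxn M1 M2) => n.
by rewrite geq_max => /andP [/u_N ? /v_N ?]; apply: pdiv_byD.
Qed.

Lemma Qp_in_ballB u v : Qp_in_ball p N u -> Qp_in_ball p N v ->
  Qp_in_ball p N (fun n => u n - v n).
Proof.
move=> u_N [M v_N]; apply: Qp_in_ballD u_N _.
by exists M => n /v_N; rewrite pdiv_byN.
Qed.

End balls.

Lemma Qp_eq0_scale p u q : Qp_eq p u Qp_zero -> Qp_eq p (fun n => q * u n) Qp_zero.
Proof.
move=> u0 N; have := Qp_in_ballZ (pdiv_by_vp p q) (u0 (N - vp p q)).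
by rewrite addrC subrK; apply: Qp_in_ball_ext => n; rewrite /Qp_zero !subr0.
Qed.

Section padic_sequences.
Variables (p : nat) (u : nat -> rat).
Hypotheses (p_pr : prime p) (u_cauchy : padic_cauchy p u).

Lemma padic_cauchy_tail N :
  exists M, forall m, (M <= m)%N -> Qp_in_ball p N (fun n => u n - u m).
Proof. by have [M u_M] := u_cauchy N; exists M => m Mm; exists M => n /u_M; apply. Qed.

Lemma padic_cauchy_bounded : exists J, Qp_in_ball p J u.
Proof.
have [M u_M] := u_cauchy 0.
exists (Num.min 0 (vp p (u M))), M => n Mn.
rewrite -(subrK (u M) (u n)); apply: (pdiv_byD p_pr).
- by apply: pdiv_byW (u_M n M Mn (leqnn M)); rewrite ge_min lexx.
- by apply: pdiv_byW (pdiv_by_vp p (u M)); rewrite ge_min lexx orbT.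
Qed.

Lemma Qp_neq0_vp_eventually : ~ Qp_eq p u Qp_zero ->
  exists k M, forall n, (M <= n)%N -> u n != 0 /\ vp p (u n) = k.
Proof.
move=> u_neq0; have [N not_ball] := not_all_ex_not _ _ u_neq0.
have [M u_M] := u_cauchy N.
have [m not_imp] : exists m, ~ ((M <= m)%N -> pdiv_by p N (u m)).
  apply: not_all_ex_not => all_div; apply: not_ball; exists M => n /all_div.
  by rewrite /Qp_zero subr0.
have [Mm not_div] := imply_to_and _ _ not_imp.
have um0 : u m != 0 by apply/eqP => um0; apply: not_div; rewrite um0 pdiv_by0.
have lt_N : vp p (u m) < N.
  by rewrite ltNge; apply/negP => le; apply: not_div; rewrite /pdiv_by le orbT.
exists (vp p (u m)), M => n Mn.
by have := vpD_dominant p_pr um0 lt_N (u_M n m Mn Mm); rewrite addrC subrK.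
Qed.

End padic_sequences.

Section local_approximation.
Variables (p : nat) (a b : nat -> rat) (K : int).
Hypotheses (p_pr : prime p) (a_cauchy : padic_cauchy p a) (b_cauchy : padic_cauchy p b).

Lemma scaling_approx_neq0 : ~ Qp_eq p a Qp_zero ->
  exists (c : rat) (T : nat), forall q : rat, pdiv_by p T (q - c) ->
    Qp_in_ball p K (fun n => q * a n - b n).
Proof.
move=> a_neq0.
have [k [Mk vp_a]] := Qp_neq0_vp_eventually p_pr a_cauchy a_neq0.
have [J [MJ b_J]] := padic_cauchy_bounded p_pr b_cauchy.
pose V := Num.min (K - k) (J - k).
have [Ma a_tail] := padic_cauchy_tail a_cauchy (K - V).
have [Mb b_tail] := padic_cauchy_tail b_cauchy K.
pose n0 := (Mk + MJ + Ma + Mb)%N.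
have [le_k le_J le_a le_b] : [/\ Mk <= n0, MJ <= n0, Ma <= n0 & Mb <= n0]%N.
  by rewrite /n0; split; lia.
have [a0 vp_a0] := vp_a n0 le_k.
exists (b n0 / a n0), `|K - k|%N => q q_c.
have q_c' : pdiv_by p (K - k) (q - b n0 / a n0) by apply: pdiv_byW q_c; lia.
have c_J : pdiv_by p (J - k) (b n0 / a n0).
  by have := pdiv_byM (b_J n0 le_J) (pdiv_by_vp p (a n0)^-1); rewrite vpV vp_a0.
have q_V : pdiv_by p V q.
  rewrite -(subrK (b n0 / a n0) q); apply: (pdiv_byD p_pr).
  - by apply: pdiv_byW q_c'; rewrite ge_min lexx.
  - by apply: pdiv_byW c_J; rewrite ge_min lexx orbT.
(* q a_n - b_n = q (a_n - a_n0) + a_n0 (q - c) - (b_n - b_n0), and V is a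
   lower bound for v_p(q). *)
have t1 : Qp_in_ball p K (fun n => q * (a n - a n0)).
  by have := Qp_in_ballZ q_V (a_tail n0 le_a); rewrite addrC subrK.
have t2 : Qp_in_ball p K (fun=> a n0 * (q - b n0 / a n0)).
  apply: Qp_in_ball_cst.
  by have := pdiv_byM (pdiv_by_vp p (a n0)) q_c'; rewrite vp_a0 addrC subrK.
have := Qp_in_ballB p_pr (Qp_in_ballD p_pr t1 t2) (b_tail n0 le_b).
by apply: Qp_in_ball_ext => n; field.
Qed.

Lemma scaling_approx : (Qp_eq p a Qp_zero -> Qp_eq p b Qp_zero) ->
  exists (c : rat) (T : nat), forall q : rat, pdiv_by p T (q - c) ->
    Qp_in_ball p K (fun n => q * a n - b n).
Proof.
move=> a0_b0; have [a0|] := classic (Qp_eq p a Qp_zero); last first.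
  exact: scaling_approx_neq0.
exists 0, 0%N => q _.
have := Qp_in_ballB p_pr (Qp_eq0_scale q a0 K) (a0_b0 a0 K).
by apply: Qp_in_ball_ext => n; rewrite /Qp_zero; ring.
Qed.

End local_approximation.

Lemma closure_orbit_zeros (a b : raw_adele) : adele_closure (pos_orbit a) b ->
  forall p, prime p -> Qp_eq p (a p) Qp_zero -> Qp_eq p (b p) Qp_zero.
Proof.
move=> b_cl p p_pr a0 N.
have [s [[q [_ s_qa]] s_b]] := b_cl [:: p] (fun=> N).
have := s_b p p_pr; rewrite mem_seq1 eqxx => s_b_p.
have := Qp_in_ballB p_pr (Qp_in_ballD p_pr (Qp_eq0_scale q a0 N) (s_qa p p_pr N)) s_b_p.
by apply: Qp_in_ball_ext => n; rewrite /Qp_zero /adele_scale; ring.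
Qed.

Definition primes_prod (L : nat -> nat) (C : nat) : nat :=
  \prod_(j <- iota 0 C.+1 | prime j) j ^ L j.

Lemma primes_prod_gt0 L C : (0 < primes_prod L C)%N.
Proof. by apply: prodn_cond_gt0 => j j_pr; rewrite expn_gt0 prime_gt0. Qed.

Lemma dvdn_primes_prod L C p : prime p -> (p <= C)%N ->
  (p ^ L p %| primes_prod L C)%N.
Proof.
move=> p_pr pC; rewrite /primes_prod (big_rem p) ?mem_iota //=.
by rewrite p_pr dvdn_mulr.
Qed.

Lemma coprime_primes_prod L C p k : prime p -> (C < p)%N ->
  coprime (p ^ k) (primes_prod L C).
Proof.
move=> p_pr Cp; apply: coprimeXl; rewrite /primes_prod big_seq_cond.
apply: (big_ind (coprime p)) => [|m n cm cn|j]; first exact: coprimen1.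
  by rewrite coprimeMr cm cn.
rewrite mem_iota add0n => /andP [/andP [_ jC] j_pr].
rewrite coprimeXr // prime_coprime // dvdn_prime2 //.
by apply/eqP => pj; move: jC; rewrite -pj; lia.
Qed.

Lemma chinese_primes (r L : nat -> nat) C :
  exists m, forall p, prime p -> (p <= C)%N -> m = r p %[mod p ^ L p].
Proof.
elim: C => [|C [m m_r]].
  by exists 0%N => p p_pr; rewrite leqn0 => /eqP p0; rewrite p0 in p_pr.
have [C1_pr|C1_npr] := boolP (prime C.+1); last first.
  exists m => p p_pr; rewrite leq_eqVlt => /predU1P [pC|]; last exact: m_r.
  by rewrite -pC p_pr in C1_npr.
have co := coprime_primes_prod L (L C.+1) C1_pr (ltnSn C).
exists (chinese (C.+1 ^ L C.+1) (primes_prod L C) (r C.+1) m) => p p_pr.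
rewrite leq_eqVlt => /predU1P [->|pC]; first exact: chinese_modl.
have dvd_p := dvdn_primes_prod L p_pr pC.
by rewrite -(modn_dvdm _ dvd_p) chinese_modr // modn_dvdm // m_r.
Qed.

Lemma chinese_primes_pos (r L : nat -> nat) C :
  exists2 m, (0 < m)%N & forall p, prime p -> (p <= C)%N -> m = r p %[mod p ^ L p].
Proof.
have [m m_r] := chinese_primes r L C.
exists (m + primes_prod L C)%N => [|p p_pr pC].
  by rewrite addn_gt0 primes_prod_gt0 orbT.
by rewrite -modnDmr (eqP (dvdn_primes_prod L p_pr pC)) addn0 m_r.
Qed.

Lemma logn_fact_lt p C : prime p -> (C < p)%N -> logn p C`! = 0%N.
Proof.
move=> p_pr; elim: C => [|C IH] Cp; first by rewrite fact0 logn1.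
rewrite factS lognM ?fact_gt0 // IH ?(ltnW Cp) // addn0 logn_coprime //.
by rewrite prime_coprime // gtnNdvd.
Qed.

Lemma strong_approx (C : nat) (c : nat -> rat) (T : nat -> nat) :
  exists q : rat, [/\ 0 < q,
    forall p, prime p -> (C < p)%N -> pdiv_by p 0 q &
    forall p, prime p -> (p <= C)%N -> pdiv_by p (T p) (q - c p)].
Proof.
pose E := \max_(p <- iota 0 C.+1) `|vp p (c p)|%N.
pose D := (C`! ^ E)%N.
have D_gt0 : (0 < D)%N by rewrite expn_gt0 fact_gt0.
have vp_D p : vp p D%:R = (E * logn p C`!)%N by rewrite vp_nat lognX.
pose L p := (T p + E * logn p C`!)%N.
have Dc_int p : prime p -> (p <= C)%N -> pdiv_by p 0 (D%:R * c p).
  move=> p_pr pC.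
  apply: pdiv_byW (pdiv_byM (pdiv_by_vp p D%:R) (pdiv_by_vp p (c p))).
  have c_E : (`|vp p (c p)| <= E)%N by apply: leq_bigmax_seq; rewrite ?mem_iota.
  have fact_p : (0 < logn p C`!)%N.
    by rewrite -pfactor_dvdn ?fact_gt0 // expn1 dvdn_fact // prime_gt0.
  have : (E <= E * logn p C`!)%N by rewrite leq_pmulr.
  rewrite vp_D; lia.
have [r r_approx] : exists r : nat -> nat, forall p, prime p -> (p <= C)%N ->
    pdiv_by p (L p) (D%:R * c p - (r p)%:R).
  apply: (choice (fun p rp => prime p -> (p <= C)%N ->
    pdiv_by p (L p) (D%:R * c p - rp%:R))) => p.
  have [/andP [p_pr pC]|p_out] := boolP (prime p && (p <= C)%N); last first.
    by exists 0%N => p_pr pC; rewrite p_pr pC in p_out.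
  by have [rp ?] := pdiv_by_nat_approx p_pr (L p) (Dc_int p p_pr pC); exists rp.
have [m m_gt0 m_r] := chinese_primes_pos r L C.
exists (m%:R / D%:R); split.
- by rewrite divr_gt0 ?ltr0n.
- move=> p p_pr Cp.
  apply: pdiv_byW (pdiv_byM (pdiv_by_vp p m%:R) (pdiv_by_vp p D%:R^-1)).
  by rewrite vpV vp_D vp_nat logn_fact_lt // muln0 oppr0 addr0.
- move=> p p_pr pC.
  have m_rp : ((p ^ L p)%N %| m%:Z - (r p)%:Z)%Z.
    by rewrite -eqz_mod_dvd !modz_nat eqz_nat m_r.
  have := pdiv_byM (pdiv_byB p_pr (pdiv_by_int p_pr m_rp) (r_approx p p_pr pC))
    (pdiv_by_vp p D%:R^-1).
  rewrite rmorphB /= -!pmulrn.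
  rewrite (_ : (m%:R - (r p)%:R - (D%:R * c p - (r p)%:R)) / D%:R = m%:R / D%:R - c p).
    by apply: pdiv_byW; rewrite vpV vp_D /L; lia.
  by field; rewrite pnatr_eq0 -lt0n.
Qed.

Lemma zeros_closure_orbit (a b : raw_adele) :
  is_finite_adele a -> is_finite_adele b ->
  (forall p, prime p -> Qp_eq p (a p) Qp_zero -> Qp_eq p (b p) Qp_zero) ->
  adele_closure (pos_orbit a) b.
Proof.
move=> [a_cauchy [Ba a_int]] [b_cauchy [Bb b_int]] zeros F N.
pose C := maxn (\max_(p <- F) p) (maxn Ba Bb).
pose K := \max_(p <- F) `|N p|%N.
have [ct ct_approx] : exists ct : nat -> rat * nat, forall p, prime p ->
    forall q, pdiv_by p (ct p).2 (q - (ct p).1) ->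
    Qp_in_ball p K (fun n => q * a p n - b p n).
  apply: (choice (fun p (ct : rat * nat) => prime p -> forall q,
    pdiv_by p ct.2 (q - ct.1) -> Qp_in_ball p K (fun n => q * a p n - b p n))) => p.
  have [p_pr|_] := boolP (prime p); last by exists (0, 0%N).
  have [c [T approx]] :=
    scaling_approx K p_pr (a_cauchy p p_pr) (b_cauchy p p_pr) (zeros p p_pr).
  by exists (c, T).
have [q [q_gt0 q_int q_approx]] :=
  strong_approx C (fun p => (ct p).1) (fun p => (ct p).2).
exists (adele_scale q a); split.
  by exists q; split=> // p _ N'; exists 0%N => n _; rewrite subrr pdiv_by0.
move=> p p_pr; rewrite /adele_scale.
have [pC|Cp] := leqP p C.
  apply: Qp_in_ballW (ct_approx p p_pr q (q_approx p p_pr pC)).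
  case: ifP => // pF; rewrite (le_trans (ler_norm _)) // -abszE lez_nat.
  exact: leq_bigmax_seq.
have pF : p \notin F.
  apply: contraTN Cp => pF; rewrite -leqNgt.
  exact: leq_trans (leq_bigmax_seq _ pF isT) (leq_maxl _ _).
have [Ba_p Bb_p] : (Ba < p)%N /\ (Bb < p)%N by move: Cp; rewrite /C; lia.
have qa_int := Qp_in_ballZ (q_int p p_pr Cp) (a_int p p_pr Ba_p).
rewrite addr0 in qa_int.
by rewrite (negbTE pF); apply: (Qp_in_ballB p_pr qa_int (b_int p p_pr Bb_p)).
Qed.

Unset Implicit Arguments.

Theorem lemma2p3 (a b : raw_adele) :
  is_finite_adele a -> is_finite_adele b ->
  (adele_closure (pos_orbit a) b <->
   (forall p : nat, prime p -> Qp_eq p (a p) Qp_zero -> Qp_eq p (b p) Qp_zero)).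
Proof.
move=> a_fin b_fin; split; first exact: closure_orbit_zeros.
exact: zeros_closure_orbit.
Qed.
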